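(* Let $t,w,w',n,g$ be positive integers with $t\le w\le w'$. Suppose that there exists a $t$-resolvable Steiner system $\mathrm{S}(w,w',n)$. If there exists a large set $\mathrm{LGS}(t,w,w',g)$, then there exists a large set $\mathrm{LGS}(t,w,n,g)$.
   Context: A Steiner system $\mathrm{S}(s,k,n)$ is a pair $(X,\mathcal{B})$ with $|X|=n$ and $\mathcal{B}$ a family of $k$-subsets (blocks) of $X$ such that every $s$-subset of $X$ lies in exactly one block. An $\mathrm{S}(w,w',n)$ $(X,\mathcal{B})$ is $t$-resolvable ($t\le w$) if $\mathcal{B}$ can be partitioned into subfamilies each of which is the block set of an $\mathrm{S}(t,w',n)$ on $X$. For a set $Y$ of size $m$, let $X=Y\times[g]$ with groups $\{y\}\times[g]$. An H-design $\mathrm{H}(m,g,w,t)$ is a family of $w$-subsets (blocks) of $X$, each meeting every group in at most one point, such that every $t$-subset of $X$ with points in $t$ distinct groups lies in exactly one block. A block $\{(y_1,a_1),\dots,(y_w,a_w)\}$ is identified with the word indexed by $Y$ over $\{0\}\cup[g]$ having entry $a_s$ at coordinate $y_s$ and $0$ elsewhere. A generalized Steiner system $\mathrm{GS}(t,w,m,g)$ is an $\mathrm{H}(m,g,w,t)$ in which any two distinct blocks have Hamming distance at least $2(w-t)+1$. A large set $\mathrm{LGS}(t,w,m,g)$ is a partition of the set of all $w$-subsets of $Y\times[g]$ meeting each group in at most one point into block sets of $\mathrm{GS}(t,w,m,g)$'s (on the same groups). *)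

From mathcomp Require Import all_boot.
Unset Printing Implicit Defensive.

Definition steiner (s k n : nat) (B : {set {set 'I_n}}) : Prop :=
  (forall b, b \in B -> #|b| = k) /\
  (forall S : {set 'I_n}, #|S| = s -> exists! b, b \in B /\ S \subset b).

Definition t_resolvable (t w w' n : nat) (B : {set {set 'I_n}}) : Prop :=
  steiner w w' n B /\
  exists P : {set {set {set 'I_n}}},
    partition P B /\ forall C, C \in P -> steiner t w' n C.

(* Points Y x [g] with Y = 'I_m, [g] = 'I_g; group of y is {y} x [g]. *)
Definition pts (m g : nat) := ('I_m * 'I_g)%type.

Definition partial_transversal m g (b : {set pts m g}) : bool :=
  [forall y : 'I_m, #|[set p in b | p.1 == y]| <= 1].

Definition distinct_groups m g (S : {set pts m g}) : bool :=
  [forall p in S, forall q in S, (p.1 == q.1) ==> (p == q)].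

Definition Hdesign (m g w t : nat) (B : {set {set pts m g}}) : Prop :=
  (forall b, b \in B -> #|b| = w /\ partial_transversal m g b) /\
  (forall S : {set pts m g}, #|S| = t -> distinct_groups m g S ->
     exists! b, b \in B /\ S \subset b).

(* Word of a block: coordinate y carries Some a if (y,a) is in the block,
   None (the symbol 0) otherwise. *)
Definition word m g (b : {set pts m g}) (y : 'I_m) : option 'I_g :=
  [pick a : 'I_g | (y, a) \in b].

Definition hamming m g (b1 b2 : {set pts m g}) : nat :=
  #|[set y : 'I_m | word m g b1 y != word m g b2 y]|.

Definition GS (t w m g : nat) (B : {set {set pts m g}}) : Prop :=
  Hdesign m g w t B /\
  (forall b1 b2, b1 \in B -> b2 \in B -> b1 != b2 ->
     2 * (w - t) + 1 <= hamming m g b1 b2).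

Definition all_wsets (w m g : nat) : {set {set pts m g}} :=
  [set b : {set pts m g} | (#|b| == w) && partial_transversal m g b].

Definition LGS (t w m g : nat) : Prop :=
  exists P : {set {set {set pts m g}}},
    partition P (all_wsets w m g) /\ forall B, B \in P -> GS t w m g B.

From mathcomp Require Import all_boot zify.

(* Copy each GS(t,w,w',g) of the given large set onto every block b of one
   resolution class C of the S(w,w',n), identifying the w' groups with the
   points of b.  An admissible w-set on n groups has a support of size w, which
   lies in exactly one block of the S(w,w',n), hence in exactly one class;
   pulled back to that block it lies in exactly one GS of the large set, so the
   copies, grouped by (C, GS), partition all admissible w-sets.  Each family is
   a GS: a t-set on distinct groups lies in a unique block of C and is then
   covered by the copy of a unique block of the GS, and two blocks of C meet in
   fewer than t points, so copies on different blocks differ in at least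
   2(w-t+1) coordinates, while copies on the same block keep the distance of
   the GS. *)

Set Implicit Arguments.
Unset Strict Implicit.

Definition supp m g (X : {set pts m g}) : {set 'I_m} := [set p.1 | p in X].

Lemma partial_transversalP m g (X : {set pts m g}) :
  reflect {in X &, forall p q, p.1 = q.1 -> p = q} (partial_transversal m g X).
Proof.
apply: (iffP forallP) => [H p q pX qX e | H y].
  by apply: (card_le1_eqP (H p.1)); rewrite !inE ?pX ?qX ?e /=.
apply/card_le1_eqP => p q; rewrite !inE => /andP[pX /eqP e1] /andP[qX /eqP e2].
by apply: H => //; rewrite e1 e2.
Qed.

Lemma distinct_groupsE m g (X : {set pts m g}) :
  distinct_groups m g X = partial_transversal m g X.
Proof.
apply/forall_inP/partial_transversalP => [H p q pX qX e | H p pX].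
  by apply/eqP; have /forall_inP/(_ q qX)/implyP := H p pX; apply; rewrite e.
by apply/forall_inP => q qX; apply/implyP => /eqP e; apply/eqP; apply: H.
Qed.

Lemma card_supp m g (X : {set pts m g}) :
  partial_transversal m g X -> #|supp X| = #|X|.
Proof. by move/partial_transversalP; apply: card_in_imset. Qed.

Lemma word_supp m g (X : {set pts m g}) y : (word m g X y != None) = (y \in supp X).
Proof.
rewrite /word; case: pickP => [a Xya | noX] /=.
  by apply/esym/imsetP; exists (y, a).
apply/esym/negbTE/imsetP => -[[z a] Xza /= eyz]; subst z.
by have := noX a; rewrite Xza.
Qed.

Lemma leq_supp_diff_hamming m g (X1 X2 : {set pts m g}) :
  #|supp X1 :\: supp X2| + #|supp X2 :\: supp X1| <= hamming m g X1 X2.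
Proof.
set D1 := _ :\: _; set D2 := _ :\: _.
have -> : #|D1| + #|D2| = #|D1 :|: D2|.
  rewrite -cardsUI; suff -> : D1 :&: D2 = set0 by rewrite cards0 addn0.
  by apply/setP => y; rewrite !inE; case: (y \in supp X1); case: (y \in supp X2).
apply/subset_leq_card/subsetP => y; rewrite !inE -!word_supp.
by case: (word m g X1 y); case: (word m g X2 y).
Qed.

Lemma exists_subset_card (T : finType) (A : {set T}) k :
  k <= #|A| -> exists2 S : {set T}, S \subset A & #|S| = k.
Proof.
rewrite -bin_gt0 -cards_draws => /card_gt0P[S]; rewrite inE => /andP[sSA /eqP cS].
by exists S.
Qed.

Lemma steiner_block_uniq s k n (C : {set {set 'I_n}}) (S b1 b2 : {set 'I_n}) :
  steiner s k n C -> #|S| = s ->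
  b1 \in C -> S \subset b1 -> b2 \in C -> S \subset b2 -> b1 = b2.
Proof.
move=> [_ exC] /exC[b [_ uniq_b]] b1C sSb1 b2C sSb2.
by rewrite -(uniq_b b1) // -(uniq_b b2).
Qed.

Lemma steiner_meet_lt s k n (C : {set {set 'I_n}}) (b1 b2 : {set 'I_n}) :
  steiner s k n C -> b1 \in C -> b2 \in C -> b1 != b2 -> #|b1 :&: b2| < s.
Proof.
move=> stC b1C b2C; apply: contraNT; rewrite -leqNgt => /exists_subset_card[S sS cS].
apply/eqP; apply: (steiner_block_uniq stC cS b1C _ b2C).
  exact: subset_trans sS (subsetIl _ _).
exact: subset_trans sS (subsetIr _ _).
Qed.

Lemma partition_mem (T : finType) (P : {set {set T}}) D A x :
  partition P D -> A \in P -> x \in A -> x \in D.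
Proof. by move=> /cover_partition <- AP xA; apply/bigcupP; exists A. Qed.

Section LiftToBlock.

Variables (n m g : nat) (x0 : 'I_n) (b : {set 'I_n}).
Hypothesis card_b : #|b| = m.

(* The default [x0] is never used: [y < m = #|b|]. *)
Definition emb (y : 'I_m) : 'I_n := nth x0 (enum b) y.
Definition emb_pt (p : pts m g) : pts n g := (emb p.1, p.2).
Definition lift (X : {set pts m g}) : {set pts n g} := emb_pt @: X.
Definition pull (Y : {set pts n g}) : {set pts m g} := emb_pt @^-1: Y.

Lemma emb_inj : injective emb.
Proof.
move=> y1 y2 /eqP; rewrite /emb nth_uniq ?enum_uniq -?cardE ?card_b //.
by move/eqP/val_inj.
Qed.

Lemma emb_mem y : emb y \in b.
Proof. by rewrite -mem_enum /emb mem_nth // -cardE card_b. Qed.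

Lemma emb_onto x : x \in b -> exists y, x = emb y.
Proof.
move=> xb; have ltxm : index x (enum b) < m by rewrite -card_b cardE index_mem mem_enum.
by exists (Ordinal ltxm); rewrite /emb nth_index ?mem_enum.
Qed.

Lemma emb_pt_inj : injective emb_pt.
Proof. by move=> [y1 a1] [y2 a2] [/emb_inj -> ->]. Qed.

Lemma lift_inj : injective lift.
Proof. exact: imset_inj emb_pt_inj. Qed.

Lemma card_lift X : #|lift X| = #|X|.
Proof. exact: card_imset emb_pt_inj. Qed.

Lemma mem_lift X y a : ((emb y, a) \in lift X) = ((y, a) \in X).
Proof. by rewrite -(mem_imset _ _ emb_pt_inj). Qed.

Lemma supp_lift X : supp (lift X) \subset b.
Proof. by apply/subsetP => _ /imsetP[_ /imsetP[p _ ->] ->]; apply: emb_mem. Qed.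

Lemma partial_transversal_lift X :
  partial_transversal m g X -> partial_transversal n g (lift X).
Proof.
move/partial_transversalP => ptX; apply/partial_transversalP.
by move=> _ _ /imsetP[p pX ->] /imsetP[q qX ->] /emb_inj/(ptX p q pX qX) ->.
Qed.

Lemma word_lift X y : word n g (lift X) (emb y) = word m g X y.
Proof. by apply: eq_pick => a; rewrite /= mem_lift. Qed.

Lemma hamming_lift X1 X2 : hamming m g X1 X2 <= hamming n g (lift X1) (lift X2).
Proof.
rewrite /hamming -(card_imset _ emb_inj); apply/subset_leq_card/subsetP.
by move=> z /imsetP[y]; rewrite !inE -!word_lift => neq ->.
Qed.

Lemma pullK Y : supp Y \subset b -> lift (pull Y) = Y.
Proof.
move=> sYb; apply/setP => -[x a]; apply/imsetP/idP => [[p] | Yxa].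
  by rewrite inE => Yp ->.
have [y exy] : exists y, x = emb y by apply/emb_onto/(subsetP sYb)/imsetP; exists (x, a).
by exists (y, a); rewrite ?inE /emb_pt /= -exy.
Qed.

Lemma pull_subset X (Y : {set pts n g}) : Y \subset lift X -> pull Y \subset X.
Proof.
move/subsetP => sYX; apply/subsetP => p; rewrite inE => /sYX.
by rewrite (mem_imset _ _ emb_pt_inj).
Qed.

Lemma card_pull Y : supp Y \subset b -> #|pull Y| = #|Y|.
Proof. by move=> sYb; rewrite -card_lift pullK. Qed.

Lemma partial_transversal_pull Y :
  partial_transversal n g Y -> partial_transversal m g (pull Y).
Proof.
move/partial_transversalP => ptY; apply/partial_transversalP => p q.
rewrite !inE => Yp Yq epq; apply: emb_pt_inj; apply: ptY => //.
by rewrite /= epq.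
Qed.

Lemma lift_all_wsets w X :
  X \in all_wsets w m g -> lift X \in all_wsets w n g.
Proof.
by rewrite !inE card_lift => /andP[-> /partial_transversal_lift ->].
Qed.

End LiftToBlock.

Section LiftedDesigns.

Variables (t w w' n g : nat) (x0 : 'I_n).
Variables (B : {set {set 'I_n}}) (P : {set {set {set 'I_n}}}).
Variable L : {set {set {set pts w' g}}}.
Hypothesis le_tw : t <= w.
Hypothesis steinerB : steiner w w' n B.
Hypothesis partP : partition P B.
Hypothesis steinerP : forall C, C \in P -> steiner t w' n C.
Hypothesis partL : partition L (all_wsets w w' g).
Hypothesis GS_L : forall Q, Q \in L -> GS t w w' g Q.

Implicit Types (C : {set {set 'I_n}}) (Q : {set {set pts w' g}}).
Implicit Types (b : {set 'I_n}) (X : {set pts w' g}) (Y : {set pts n g}).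

Definition lifted_design C Q : {set {set pts n g}} :=
  \bigcup_(b in C) [set lift x0 b X | X in Q].

Lemma card_class_block C b : C \in P -> b \in C -> #|b| = w'.
Proof. by move=> CP; apply: (steinerP CP).1. Qed.

Lemma lift_in_design C Q b X :
  b \in C -> X \in Q -> lift x0 b X \in lifted_design C Q.
Proof. by move=> bC XQ; apply/bigcupP; exists b => //; apply: imset_f. Qed.

Lemma lifted_design_sub C Q :
  C \in P -> Q \in L -> lifted_design C Q \subset all_wsets w n g.
Proof.
move=> CP QL; apply/subsetP => _ /bigcupP[b bC /imsetP[X XQ ->]].
exact/(lift_all_wsets x0 (card_class_block CP bC))/(partition_mem partL QL XQ).
Qed.

Lemma all_wsets_lift Y : Y \in all_wsets w n g ->
  exists C b X, [/\ C \in P, b \in C, X \in all_wsets w w' g & Y = lift x0 b X].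
Proof.
rewrite inE => /andP[/eqP cY ptY].
have [b [[bB sYb] _]] := steinerB.2 (supp Y) (etrans (card_supp ptY) cY).
have coverB : b \in cover P by rewrite (cover_partition partP).
have [CP bC] := (pblock_mem coverB, etrans (mem_pblock P b) coverB).
have cb := card_class_block CP bC.
exists (pblock P b), b, (pull w' x0 b Y); split=> //; last by rewrite pullK.
by rewrite inE card_pull // cY eqxx partial_transversal_pull.
Qed.

Lemma lift_all_wsets_inj C1 C2 b1 b2 X1 X2 :
  C1 \in P -> C2 \in P -> b1 \in C1 -> b2 \in C2 ->
  X1 \in all_wsets w w' g -> lift x0 b1 X1 = lift x0 b2 X2 -> b1 = b2 /\ X1 = X2.
Proof.
move=> C1P C2P b1C b2C wX1 eY.
have [cb1 cb2] := (card_class_block C1P b1C, card_class_block C2P b2C).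
have := lift_all_wsets x0 cb1 wX1; rewrite inE => /andP[/eqP cY ptY].
have eb : b1 = b2.
  apply: (steiner_block_uniq steinerB (etrans (card_supp ptY) cY)).
  - exact: partition_mem partP C1P b1C.
  - exact: supp_lift cb1 _.
  - exact: partition_mem partP C2P b2C.
  - by rewrite eY; apply: supp_lift cb2 _.
by subst b2; split=> //; apply: (lift_inj cb1) eY.
Qed.

Lemma partition_lifted_designs :
  partition [set lifted_design C Q | C in P, Q in L] (all_wsets w n g).
Proof.
have [tP tL] := (partition_trivIset partP, partition_trivIset partL).
apply/and3P; split.
- apply/eqP/setP => Y; apply/bigcupP/idP => [[_ /imset2P[C Q CP QL ->]] | wY].
    exact: (subsetP (lifted_design_sub CP QL)).
  have [C [b [X [CP bC wX ->]]]] := all_wsets_lift wY.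
  have coverX : X \in cover L by rewrite (cover_partition partL).
  exists (lifted_design C (pblock L X)); first by rewrite imset2_f ?pblock_mem.
  by rewrite lift_in_design ?mem_pblock.
- apply/trivIsetP => _ _ /imset2P[C1 Q1 C1P Q1L ->] /imset2P[C2 Q2 C2P Q2L ->] ne.
  rewrite -setI_eq0; apply: contraNT ne => /set0Pn[Y /setIP[]].
  move=> /bigcupP[b1 b1C /imsetP[X1 X1Q ->]] /bigcupP[b2 b2C /imsetP[X2 X2Q]].
  have wX1 := partition_mem partL Q1L X1Q.
  case/(lift_all_wsets_inj C1P C2P b1C b2C wX1) => eb eX; subst b2 X2.
  by rewrite -(def_pblock tP C1P b1C) (def_pblock tP C2P b2C)
             -(def_pblock tL Q1L X1Q) (def_pblock tL Q2L X2Q).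
- apply/imset2P => -[C Q CP QL e].
  have [b bC] := set0Pn _ (partition_neq0 partP CP).
  have [X XQ] := set0Pn _ (partition_neq0 partL QL).
  by have := lift_in_design bC XQ; rewrite -e inE.
Qed.

Lemma Hdesign_lifted_design C Q :
  C \in P -> Q \in L -> Hdesign n g w t (lifted_design C Q).
Proof.
move=> CP QL; have [[_ uniqQ] _] := GS_L QL.
split=> [Y /(subsetP (lifted_design_sub CP QL)) | S cS].
  by rewrite inE => /andP[/eqP].
rewrite distinct_groupsE => ptS.
have [b [[bC sSb] uniq_b]] := (steinerP CP).2 (supp S) (etrans (card_supp ptS) cS).
have cb := card_class_block CP bC.
have cS' : #|pull w' x0 b S| = t by rewrite card_pull.
have dS' : distinct_groups w' g (pull w' x0 b S).
  by rewrite distinct_groupsE partial_transversal_pull.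
have [X [[XQ sSX] uniqX]] := uniqQ _ cS' dS'.
exists (lift x0 b X); split.
  by rewrite lift_in_design // -(pullK x0 cb sSb) imsetS.
move=> _ [/bigcupP[b' b'C /imsetP[X' X'Q ->]] sSY].
have eb : b = b'.
  apply: uniq_b; split=> //; apply: subset_trans (imsetS _ sSY) _.
  exact: supp_lift (card_class_block CP b'C) _.
subst b'; congr lift; apply: uniqX; split=> //.
exact: (pull_subset cb sSY).
Qed.

Lemma hamming_lifted_design C Q : C \in P -> Q \in L ->
  {in lifted_design C Q &, forall Y1 Y2,
    Y1 != Y2 -> 2 * (w - t) + 1 <= hamming n g Y1 Y2}.
Proof.
move=> CP QL _ Y2 /bigcupP[b1 b1C /imsetP[X1 X1Q ->]].
move=> /bigcupP[b2 b2C /imsetP[X2 X2Q ->]] neY.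
have [cb1 cb2] := (card_class_block CP b1C, card_class_block CP b2C).
have [b1b2 | nb] := eqVneq b1 b2.
  subst b2; apply: leq_trans (hamming_lift x0 cb1 X1 X2).
  by apply: (GS_L QL).2 => //; apply: contraNneq neY => ->.
have card_supp_lift b X : #|b| = w' -> X \in Q -> #|supp (lift x0 b X)| = w.
  move=> cb /(partition_mem partL QL) wX; have := lift_all_wsets x0 cb wX.
  by rewrite inE => /andP[/eqP <- /card_supp].
have meet_lt : #|supp (lift x0 b1 X1) :&: supp (lift x0 b2 X2)| < t.
  apply: leq_ltn_trans (steiner_meet_lt (steinerP CP) b1C b2C nb).
  by apply/subset_leq_card/setISS; apply: supp_lift.
apply: leq_trans (leq_supp_diff_hamming _ _).
rewrite !cardsD [supp (lift x0 b2 X2) :&: _]setIC !card_supp_lift //.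
clear -le_tw meet_lt; lia.
Qed.

Lemma GS_lifted_design C Q :
  C \in P -> Q \in L -> GS t w n g (lifted_design C Q).
Proof.
by move=> CP QL; split; [apply: Hdesign_lifted_design | apply: hamming_lifted_design].
Qed.

End LiftedDesigns.

Theorem theorem3p2 (t w w' n g : nat) :
  0 < t -> 0 < w -> 0 < w' -> 0 < n -> 0 < g ->
  t <= w -> w <= w' ->
  (exists B : {set {set 'I_n}}, t_resolvable t w w' n B) ->
  LGS t w w' g ->
  LGS t w n g.
Proof.
move=> _ _ _ n_gt0 _ le_tw _ [B [steinerB [P [partP steinerP]]]] [L [partL GS_L]].
pose x0 : 'I_n := Ordinal n_gt0.
exists [set lifted_design x0 C Q | C in P, Q in L]; split.
  exact: (partition_lifted_designs x0 steinerB partP steinerP partL).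
move=> _ /imset2P[C Q CP QL ->].
exact: (GS_lifted_design x0 le_tw steinerP partL GS_L CP QL).
Qed.
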